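(* There is a constant $c$ such that for all sufficiently large $n$ and every integer $k>\frac{2}{3}n+c$, the pair $(n,k)$ is good.
   Context: All graphs are undirected and unweighted. For a graph $G=(V,E)$ and integer $k$, a $k$-spanner of $G$ is a subgraph $H=(V,E')$, $E'\subseteq E$, with $\mathrm{dist}_H(u,v)\le k\cdot\mathrm{dist}_G(u,v)$ for all $u,v\in V$. A minimum $k$-spanner is a $k$-spanner with the fewest edges. Girth = length of a shortest cycle ($+\infty$ if acyclic). A pair $(n,k)$ is good if for every $n$-vertex graph at least one of its minimum $k$-spanners has girth at least $k+2$. *)

From mathcomp Require Import all_boot all_order all_algebra.
Set Implicit Arguments. Unset Strict Implicit. Unset Printing Implicit Defensive.

(* A simple undirected graph on vertex set 'I_n is given by its edge set:
   a set of 2-element subsets of 'I_n. *)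
Definition graph (n : nat) := {set {set 'I_n}}.

Definition simple_graph n (E : graph n) : Prop :=
  forall e, e \in E -> #|e| = 2.

Definition adj n (E : graph n) : rel 'I_n := fun x y => [set x; y] \in E.

Definition walk_len n (E : graph n) (u v : 'I_n) (l : nat) : Prop :=
  exists s : seq 'I_n, [/\ path (adj E) u s, last u s = v & size s = l].

(* H is a k-spanner of G: a subgraph (same vertex set, subset of the edges)
   with dist_H(u,v) <= k * dist_G(u,v) for all u v, distances being the
   minimum length of a walk (+oo if none). *)
Definition spanner n (k : nat) (G H : graph n) : Prop :=
  H \subset G /\
  forall (u v : 'I_n) (d : nat), walk_len G u v d ->
    exists d', d' <= k * d /\ walk_len H u v d'.

Definition min_spanner n (k : nat) (G H : graph n) : Prop :=
  spanner k G H /\ forall H', spanner k G H' -> #|H| <= #|H'|.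

(* a cycle: a sequence of >= 3 pairwise distinct vertices, consecutive ones
   (cyclically) adjacent; its length is the number of vertices *)
Definition is_cycle n (E : graph n) (s : seq 'I_n) : Prop :=
  [/\ 3 <= size s, uniq s & cycle (adj E) s].

(* girth(E) >= g  (vacuous for acyclic graphs, girth = +oo) *)
Definition girth_ge n (E : graph n) (g : nat) : Prop :=
  forall s, is_cycle E s -> g <= size s.

Definition good (n k : nat) : Prop :=
  forall G : graph n, simple_graph G ->
    exists H : graph n, min_spanner k G H /\ girth_ge H k.+2.

From mathcomp Require Import all_boot all_order all_algebra zify.
From Stdlib Require Import Classical Wf_nat.
Set Implicit Arguments. Unset Strict Implicit. Unset Printing Implicit Defensive.

(* Call an edge of a minimum k-spanner H short if it lies on a cycle of length
   at most k + 1.  If e = xy is short, minimality of H yields an edge uv of G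
   whose ends are at distance > k in H - e.  Every edge of G that loses its
   k-path when e is deleted has both ends connected to x in H - e, and so has
   uv; hence adding uv to H - e closes a cycle C of length >= k + 2 to which all
   these vertices are attached.  Two vertices attached to C are joined by a path
   that meets C only in the shorter arc between the points where they first
   reach it, so its length is at most n - |C|/2 <= k as soon as 2n <= 3k + 2.
   Thus H - e + uv is again a minimum k-spanner, and its short edges are short
   edges of H other than e: iterating the exchange removes all cycles of length
   at most k + 1. *)

Section Walks.
Variable n : nat.
Implicit Types (E F : graph n) (g : {set 'I_n}) (a b c p q x y z : 'I_n) (s t : seq 'I_n).

Definition walk E a s b : bool := path (adj E) a s && (last a s == b).

Definition dist_le E l a b : Prop := exists2 s, walk E a s b & size s <= l.

Definition conn E a b : Prop := exists s, walk E a s b.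

Lemma adjC E : symmetric (adj E).
Proof. by move=> a b; rewrite /adj setUC. Qed.

Lemma adj_setD1 E g a b : adj (E :\ g) a b = ([set a; b] != g) && adj E a b.
Proof. by rewrite /adj in_setD1. Qed.

Lemma walk0 E a : walk E a [::] a.
Proof. by rewrite /walk /= eqxx. Qed.

Lemma walk1 E a b : adj E a b -> walk E a [:: b] b.
Proof. by move=> ab; rewrite /walk /= ab eqxx. Qed.

Lemma walk_cat E a s b t c : walk E a s b -> walk E b t c -> walk E a (s ++ t) c.
Proof.
by rewrite /walk cat_path last_cat => /andP[-> /eqP->] /andP[-> ->].
Qed.

Lemma walk_sub E F a s b : {subset E <= F} -> walk E a s b -> walk F a s b.
Proof.
move=> sEF /andP[pE lE]; rewrite /walk lE andbT.
by apply: sub_path pE => x y; apply: sEF.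
Qed.

Lemma walk_rev E a s b : walk E a s b ->
  exists t, [/\ walk E b t a, size t = size s & b :: t =i a :: s].
Proof.
case/andP=> pE /eqP <-; exists (rev (belast a s)).
have revE : last a s :: rev (belast a s) = rev (a :: s).
  by rewrite [in RHS]lastI rev_rcons.
split; last by move=> z; rewrite revE mem_rev.
- rewrite /walk rev_path (@eq_path _ _ (adj E)) ?pE /=; last by move=> ? ?; apply: adjC.
  by rewrite -(last_cons a) revE rev_cons last_rcons.
- by rewrite size_rev size_belast.
Qed.

Lemma walk_shorten E a s b : walk E a s b ->
  exists t, [/\ walk E a t b, uniq (a :: t) & {subset t <= s}].
Proof.
case/andP=> pE /eqP <-; case: (shortenP pE) => t pt ut st.
by exists t; rewrite /walk pt eqxx.
Qed.

Lemma walk_lenE E a b l : walk_len E a b l <-> exists2 s, walk E a s b & size s = l.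
Proof.
split=> [[s [pE lE sE]]|[s /andP[pE /eqP lE] sE]]; last by exists s.
by exists s; rewrite // /walk pE lE eqxx.
Qed.

Lemma dist_le_sym E l a b : dist_le E l a b -> dist_le E l b a.
Proof. by case=> s /walk_rev[t [wt st _]]; exists t; rewrite ?st. Qed.

Lemma dist_le_sub E F l a b : {subset E <= F} -> dist_le E l a b -> dist_le F l a b.
Proof. by move=> sEF [s /(walk_sub sEF) ws ls]; exists s. Qed.

Lemma dist_le_set2 E l a b p q :
  [set a; b] = [set p; q] -> dist_le E l a b -> dist_le E l p q.
Proof.
move=> eq_ab dab.
have : p \in [set a; b] /\ q \in [set a; b] by rewrite eq_ab !inE !eqxx orbT.
rewrite !inE => -[/orP[]/eqP-> /orP[]/eqP->]; try exact: dab; try exact: dist_le_sym.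
all: by exists [::]; rewrite ?walk0.
Qed.

Lemma conn_trans E a b c : conn E a b -> conn E b c -> conn E a c.
Proof. by move=> [s ws] [t wt]; exists (s ++ t); apply: walk_cat ws wt. Qed.

Lemma conn_sym E a b : conn E a b -> conn E b a.
Proof. by case=> s /walk_rev[t [wt _ _]]; exists t. Qed.

Lemma conn_sub E F a b : {subset E <= F} -> conn E a b -> conn F a b.
Proof. by move=> sEF [s /(walk_sub sEF) ws]; exists s. Qed.

Lemma walk_setU1 E g a s b : walk (g |: E) a s b ->
  dist_le E (size s) a b \/
  exists x y s1 s2, [/\ g = [set x; y], walk E a s1 x, walk E y s2 b
                        & size s1 + size s2 < size s].
Proof.
elim: s a => [|c s IH] a.
  by case/andP=> _ /eqP <-; left; exists [::]; rewrite ?walk0.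
case/andP=> /andP[ac pcs] lcs.
have /IH[[t wt lt]|[x [y [s1 [s2 [gxy w1 w2 lt]]]]]] : walk (g |: E) c s b.
  exact/andP.
all: move: ac; rewrite /adj in_setU1 => /orP[/eqP gac|ac].
- by right; exists a, c, [::], t; rewrite walk0 -gac.
- by left; exists (c :: t); [apply: walk_cat (walk1 ac) wt | rewrite ltnS].
- have : a \in [set x; y] by rewrite -gxy -gac setU11.
  rewrite !inE => /orP[]/eqP ax; last by left; exists s2; rewrite ?ax //=; lia.
  by right; exists a, y, [::], s2; rewrite walk0 ax -gxy /=; split=> //; lia.
- by right; exists x, y, (c :: s1), s2; rewrite (walk_cat (walk1 ac) w1) /=.
Qed.

Lemma path_setD1 E g a s b : b \in g -> b \notin a :: s ->
  path (adj (E :\ g)) a s = path (adj E) a s.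
Proof.
move=> bg; elim: s a => //= c s IH a; rewrite inE negb_or => /andP[ba bcs].
have acg : [set a; c] != g.
  apply: contraNneq bcs => acg; move: bg; rewrite -acg !inE (negPf ba) /=.
  by move=> ->.
by rewrite adj_setD1 acg IH.
Qed.

Lemma walk_first_hit E (A : {pred 'I_n}) a s b : walk E a s b -> b \in A ->
  exists t c, [/\ walk E a t c, c \in A & forall z, z \in a :: t -> z \in A -> z = c].
Proof.
elim: s a => [|d s IH] a.
  case/andP=> _ /eqP /= <- Aa; exists [::], a.
  by split; rewrite ?walk0 // => z /[!inE]/eqP.
case: (boolP (a \in A)) => [Aa _ _|Aa /andP[/andP[ad pds] lds] /(IH d)[]].
  by exists [::], a; split; rewrite ?walk0 // => z /[!inE]/eqP.
- exact/andP.
move=> t [c [wt Ac hit]]; exists (d :: t), c; split=> //.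
  exact: walk_cat (walk1 ad) wt.
by move=> z /[!inE]/predU1P[->|/hit//]; rewrite (negPf Aa).
Qed.

Lemma cycle_walk_prefix E a t j : cycle (adj E) (a :: t) -> j <= size t ->
  walk E a (take j t) (nth a (a :: t) j).
Proof.
rewrite /cycle rcons_path => /andP[pt _] jt; rewrite /walk take_path //=.
by rewrite (last_nth a) size_takel // -[a :: _]/(take j.+1 (a :: t)) nth_take.
Qed.

Lemma cycle_walk_half_cons E a t b : cycle (adj E) (a :: t) -> b \in a :: t ->
  exists r, [/\ walk E a r b, 2 * size r <= (size t).+1 & {subset r <= t}].
Proof.
move=> cc bt; pose j := index b (a :: t).
have jt : j <= size t by rewrite -ltnS -[(size t).+1]/(size (a :: t)) index_mem.
have <- : nth a (a :: t) j = b := nth_index a bt.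
have [hj|hj] := leqP (2 * j) (size t).+1.
  exists (take j t); split; first exact: cycle_walk_prefix.
    by rewrite size_takel.
  exact: mem_take.
have cc' : cycle (adj E) (a :: rev t).
  rewrite -(rot_cycle 1) rot1_cons -rev_cons rev_cycle /cycle.
  by rewrite (@eq_path _ _ (adj E)) // => ? ?; apply: adjC.
have j_gt0 : 0 < j by lia.
have j't : (size t - j).+1 <= size t by lia.
have -> : nth a (a :: t) j = nth a (a :: rev t) (size t - j).+1.
  rewrite /= nth_rev; last by lia.
  by rewrite -[in LHS](prednK j_gt0) /=; congr nth; lia.
exists (take (size t - j).+1 (rev t)); split.
- by apply: cycle_walk_prefix; rewrite ?size_rev.
- by rewrite size_takel ?size_rev //; lia.
- by move=> z /mem_take; rewrite mem_rev.
Qed.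

Lemma cycle_walk_half E (c : seq 'I_n) a b :
  cycle (adj E) c -> a \in c -> b \in c ->
  exists r, [/\ walk E a r b, 2 * size r <= size c & {subset r <= c}].
Proof.
move=> cc /rot_to[i t ct] bc.
have cat : cycle (adj E) (a :: t) by rewrite -ct rot_cycle.
have bat : b \in a :: t by rewrite -ct mem_rot.
have [r [wr hr rt]] := cycle_walk_half_cons cat bat.
exists r; split=> //; first by rewrite -(size_rot i c) ct.
by move=> z /rt tz; rewrite -(mem_rot i) ct inE tz orbT.
Qed.

Lemma conn_of_detour E x y l a b : conn E y x ->
  dist_le ([set x; y] |: E) l a b -> ~ dist_le E l a b -> conn E a x.
Proof.
move=> cyx [s /walk_setU1[[t wt ts]|[x' [y' [s1 [s2 [exy w1 _ _]]]]]] sl far].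
  by case: far; exists t; rewrite // (leq_trans ts sl).
have : x' \in [set x; y] by rewrite exy setU11.
rewrite !inE => /orP[]/eqP x'E; first by exists s1; rewrite -x'E.
by apply: conn_trans cyx; exists s1; rewrite -x'E.
Qed.

Lemma dist_le_long_cycle E (c : seq 'I_n) w l p q :
  uniq c -> cycle (adj E) c -> w \in c -> conn E p w -> conn E q w ->
  2 * n <= 2 * l + size c -> dist_le E l p q.
Proof.
move=> uc cc wc [s1 ws1] [s2 ws2] nlc.
have [t1 [a [wt1 ac hit1]]] := walk_first_hit ws1 wc.
have [t2 [b [wt2 bc hit2]]] := walk_first_hit ws2 wc.
have [r [wr rc _]] := cycle_walk_half cc ac bc.
have [t2' [wt2' _ t2'E]] := walk_rev wt2.
have [s [ws us ss]] := walk_shorten (walk_cat wt1 (walk_cat wr wt2')).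
(* The shortened walk from p to q meets c only on the arc a :: r. *)
pose S := ~: [set z in c] :|: [set z in a :: r].
have inS z : (z \in c -> z \in a :: r) -> z \in S.
  move=> zr; rewrite in_setU in_setC !in_set.
  by case: (boolP (z \in c)) => // /zr ->.
have sS : {subset p :: s <= S}.
  move=> z /predU1P[->|/ss].
    by apply: inS => /(hit1 p (mem_head _ _))->; apply: mem_head.
  rewrite !mem_cat => /or3P[zt1|zr|zt2']; apply: inS => zc.
  - by rewrite (hit1 z _ zc) ?mem_head // inE zt1 orbT.
  - by rewrite inE zr orbT.
  - have zb : z = b by apply: hit2 zc; rewrite -t2'E inE zt2' orbT.
    by rewrite zb; case/andP: wr => _ /eqP <-; apply: mem_last.
exists s => //.
have sizeS : (size s).+1 <= #|S|.
  by rewrite -[_.+1]/(size (p :: s)) -(card_uniqP us); apply/subset_leq_card/subsetP.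
have cardS : #|S| <= #|~: [set z in c]| + #|[set z in a :: r]|.
  by rewrite cardsU leq_subr.
have cardC : #|[set z in c]| + #|~: [set z in c]| = n.
  by rewrite cardsC card_ord.
have cardc : #|[set z in c]| = size c by rewrite cardsE (card_uniqP uc).
have cardar : #|[set z in a :: r]| <= (size r).+1 by rewrite cardsE card_size.
clear -sizeS cardS cardC cardc cardar rc nlc; lia.
Qed.

End Walks.

Section Spanners.
Variables (n k : nat) (G : graph n).
Implicit Types (H : graph n) (e f : {set 'I_n}) (p q u v : 'I_n).

Lemma spanner_edgeP H : spanner k G H <->
  H \subset G /\ forall p q, [set p; q] \in G -> dist_le H k p q.
Proof.
split=> -[sHG sp]; split=> //.
  move=> p q pqG; have /sp[d [dk /walk_lenE[t wt td]]] : walk_len G p q 1.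
    by apply/walk_lenE; exists [:: q]; rewrite ?walk1.
  by exists t; rewrite // td -(muln1 k).
move=> u v d /walk_lenE[s ws <-].
elim: s u ws => [|c s IH] u.
  case/andP=> _ /eqP <-; exists 0; split=> //.
  by apply/walk_lenE; exists [::]; rewrite ?walk0.
case/andP=> /andP[ucG pcs] lcs; have [t wt tk] := sp u c ucG.
have /IH[d' [dk /walk_lenE[t' wt' td']]] : walk G c s v by apply/andP.
exists (size t + size t'); split; first by rewrite td' /= mulnS leq_add.
by apply/walk_lenE; exists (t ++ t'); rewrite ?size_cat // (walk_cat wt wt').
Qed.

Lemma min_spanner_exists : 0 < k -> exists H, min_spanner k G H.
Proof.
move=> k_gt0; have spG : spanner k G G.
  by split=> // u v d wd; exists d; rewrite leq_pmull.
have [m [[[H [spH <-]] minH] _]] := dec_inh_nat_subset_has_unique_least_element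
  (fun m => exists H, spanner k G H /\ #|H| = m) (fun m => classic _)
  (ex_intro _ #|G| (ex_intro _ G (conj spG erefl))).
by exists H; split=> // H' spH'; apply/leP/minH; exists H'.
Qed.

Definition short_cycle_edge H f : Prop :=
  f \in H /\ exists p q, f = [set p; q] /\ dist_le (H :\ f) k p q.

Lemma short_cycle_edge_of_cycle H s : is_cycle H s -> size s <= k.+1 ->
  exists e, short_cycle_edge H e.
Proof.
case: s => [|x [|y [|c t]]] [//= _ + cs] sk.
rewrite /= !inE !negb_or => /andP[/and3P[xy xc _] /andP[/andP[yc yt] _]].
move: cs; rewrite /cycle /= => /and3P[Hxy Hyc pct].
exists [set y; x]; split; first by rewrite /adj setUC in Hxy.
exists y, x; split=> //; exists (c :: rcons t x); last by rewrite /= size_rcons.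
rewrite /walk /= last_rcons eqxx andbT adj_setD1 Hyc (path_setD1 _ (setU11 _ _)).
  rewrite pct !andbT; apply: contra xc => /eqP/setP/(_ c).
  by rewrite !inE eqxx orbT eq_sym (negPf yc) eq_sym.
by rewrite inE mem_rcons inE !negb_or yc yt andbT eq_sym.
Qed.

Section Exchange.
Variables (H : graph n) (e : {set 'I_n}) (x y u v : 'I_n).
Hypotheses (k_gt0 : 0 < k) (nk : 2 * n <= 3 * k + 2) (spH : spanner k G H).
Hypotheses (eH : e \in H) (exy : e = [set x; y]) (cyx : conn (H :\ e) y x).
Hypotheses (uvG : [set u; v] \in G) (uv_far : ~ dist_le (H :\ e) k u v).

Let E := H :\ e.
Let H' := [set u; v] |: E.

Lemma far_edge_conn p q :
  [set p; q] \in G -> ~ dist_le E k p q -> conn E p x /\ conn E q x.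
Proof.
move=> pqG far; have [_ /(_ p q pqG) dH] := proj1 (spanner_edgeP H) spH.
have HE : H = [set x; y] |: E by rewrite -exy setD1K.
rewrite HE in dH; split; first exact: conn_of_detour cyx dH far.
by apply: conn_of_detour cyx (dist_le_sym dH) _ => /dist_le_sym.
Qed.

Lemma exchange_spanner : spanner k G H'.
Proof.
have sEH' : {subset E <= H'} by move=> f fE; rewrite in_setU1 fE orbT.
apply/spanner_edgeP; split.
  apply/subsetP => f /setU1P[->//|/setD1P[_ fH]].
  by apply: (subsetP (proj1 spH)).
move=> p q pqG; have [/(dist_le_sub sEH')//|far] := classic (dist_le E k p q).
have [cpx cqx] := far_edge_conn pqG far.
have [cux cvx] := far_edge_conn uvG uv_far.
have [pi0 wpi0] := conn_trans cux (conn_sym cvx).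
have [pi [/andP[ppi /eqP lpi] upi _]] := walk_shorten wpi0.
have pik : k < size pi.
  rewrite ltnNge; apply/negP => pik; apply: uv_far.
  by exists pi; rewrite // /walk ppi lpi eqxx.
have cpi : cycle (adj H') (u :: pi).
  rewrite /cycle rcons_path (sub_path _ ppi) => [|a b]; last exact: sEH'.
  by rewrite lpi /adj setUC setU11.
apply: (dist_le_long_cycle upi cpi (mem_head u pi)).
- exact: conn_sub sEH' (conn_trans cpx (conn_sym cux)).
- exact: conn_sub sEH' (conn_trans cqx (conn_sym cux)).
- by rewrite /=; clear -nk pik; lia.
Qed.

Lemma exchange_short_cycle_edge f :
  short_cycle_edge H' f -> short_cycle_edge H f /\ f != e.
Proof.
have uvE : [set u; v] \notin E.
  by apply/negP => uvE; apply: uv_far; exists [:: v]; rewrite ?walk1.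
case=> /setU1P[->|fE] [p [q [fpq [s ws sk]]]].
  case: uv_far; apply: dist_le_set2 (esym fpq) _.
  by exists s; rewrite // -/E -(setU1K uvE).
move: (fE) => /setD1P[fe fH]; split=> //; split=> //; exists p, q; split=> //.
have H'f : H' :\ f = [set u; v] |: (E :\ f).
  have fuv : f != [set u; v] by apply: contraNneq uvE => <-.
  apply/setP => g; rewrite /H' /E !inE.
  by case: (eqVneq g f) => [->|gf]; rewrite ?(negPf fuv) ?gf.
move: ws; rewrite H'f.
case/walk_setU1=> [[t wt ts]|[x' [y' [s1 [s2 [uvxy w1 w2 ls]]]]]].
  exists t; last exact: leq_trans ts sk.
  by apply: walk_sub wt => g /setD1P[gf /setD1P[_ gH]]; apply/setD1P.
(* Going round f instead of through uv gives a k-walk from u to v in H - e. *)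
case: uv_far; apply: dist_le_set2 (esym uvxy) _.
have sEf : {subset E :\ f <= E} by move=> g /setD1P[].
have [t1 [wt1 st1 _]] := walk_rev (walk_sub sEf w1).
have [t2 [wt2 st2 _]] := walk_rev (walk_sub sEf w2).
exists (t1 ++ q :: t2); last by rewrite size_cat /= st1 st2 addnS (leq_trans ls sk).
apply: walk_cat wt1 (walk_cat (s := [:: q]) (walk1 _) wt2).
by rewrite /adj -fpq.
Qed.

End Exchange.

Lemma min_spanner_exchange H e : 0 < k -> 2 * n <= 3 * k + 2 ->
  min_spanner k G H -> short_cycle_edge H e ->
  exists H', min_spanner k G H' /\
    forall f, short_cycle_edge H' f -> short_cycle_edge H f /\ f != e.
Proof.
move=> k_gt0 nk [spH minH] [eH [x [y [exy dxy]]]].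
have cyx : conn (H :\ e) y x by case: (dist_le_sym dxy) => s ws _; exists s.
have [u [v [uvG uv_far]]] : exists u v, [set u; v] \in G /\ ~ dist_le (H :\ e) k u v.
  apply: NNPP => all_near.
  have /minH : spanner k G (H :\ e).
    apply/spanner_edgeP; split.
      by apply: subset_trans (subD1set H e) (proj1 spH).
    by move=> p q pqG; apply: NNPP => far; apply: all_near; exists p, q.
  by rewrite (cardsD1 e H) eH ltnn.
exists ([set u; v] |: (H :\ e)); split.
  split; first exact: exchange_spanner nk spH eH exy cyx uvG uv_far.
  move=> H'' /minH; apply: leq_trans.
  by rewrite cardsU1 (cardsD1 e H) eH leq_add2r leq_b1.
exact: exchange_short_cycle_edge.
Qed.

Lemma girth_min_spanner_exists : 0 < k -> 2 * n <= 3 * k + 2 ->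
  exists H, min_spanner k G H /\ girth_ge H k.+2.
Proof.
move=> k_gt0 nk; have [H minH] := min_spanner_exists k_gt0.
suff /(_ #|H|.+1 H H (ltnSn _) minH) : forall m H (B : {set {set 'I_n}}),
    #|B| < m -> min_spanner k G H -> (forall f, short_cycle_edge H f -> f \in B) ->
    exists H, min_spanner k G H /\ girth_ge H k.+2.
  by apply=> f [].
elim=> // m IH {}H B Bm {}minH scB.
have [girthH|short] := classic (girth_ge H k.+2); first by exists H.
have [s [cs sk]] : exists s, is_cycle H s /\ size s <= k.+1.
  apply: NNPP => none; apply: short => s cs; rewrite leqNgt; apply/negP => sk.
  by apply: none; exists s.
have [e sce] := short_cycle_edge_of_cycle cs sk.
have [H' [minH' scH']] := min_spanner_exchange k_gt0 nk minH sce.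
apply: (IH H' (B :\ e)) => //.
  by move: Bm; rewrite (cardsD1 e B) scB.
by move=> f /scH'[/scB fB fe]; rewrite in_setD1 fe.
Qed.

End Spanners.

Import GRing.Theory Num.Theory.
Local Open Scope ring_scope.

Theorem corollary1p10 :
  exists c : rat, exists N : nat, forall n : nat, (N <= n)%N ->
    forall k : nat, 2%:R / 3%:R * n%:R + c < k%:R -> good n k.
Proof.
exists 0, 0%N => n _ k.
rewrite addr0 mulrAC ltr_pdivrMr // -!natrM ltr_nat => nk G _.
apply: girth_min_spanner_exists; lia.
Qed.
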